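(* Let $T$ be the rational map of the plane $$T(x,y)=\bigg(\frac{(1+y)(1+x-xy)^2}{(1+x)(-1-y+xy)(1+x-y^2)},\ \frac{(x-y)^2(1+x+y)}{(1+y-x^2)(1+x-y^2)}\bigg),$$ let $I(x,y)=\dfrac{(x+1)(y+1)(x+y+1)}{xy}$ and $\omega=\dfrac{1}{xy}\,dx\wedge dy$. Then, as identities of rational functions/forms (valid wherever everything is defined): (i) $I\circ T^2=I$; hence $T^2$ maps each level curve $E_r=\{I=r\}$ into itself, and these level curves form a pencil of cubic curves $(x+1)(y+1)(x+y+1)-rxy=0$; (ii) $(T^2)^*\omega=-4\,\omega$, i.e. if $J$ is the Jacobian determinant of $T^2$ at $(x,y)$ and $(\bar x,\bar y)=T^2(x,y)$, then $J(x,y)/(\bar x\bar y)=-4/(xy)$.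
   Context: Geometric meaning: every projective equivalence class of (generic) pentagons in $\mathbb{RP}^2$ has a unique representative with vertices $V_1=[0:-1:1], V_2=[1:0:0], V_3=[0:1:0], V_4=[-1:0:1], V_5=[x:y:1]$; call it $P(x,y)$, so $(x,y)$ are coordinates on the moduli space $M_5$ of projective classes of pentagons. For a polygon with vertices $V_j$ (indices mod 5), the projective normal of the edge $V_jV_{j+1}$ is the line through the point $(V_{j-1}V_{j+1})\cap(V_jV_{j+2})$ (intersection of the diagonals) and the point $(V_{j-1}V_j)\cap(V_{j+1}V_{j+2})$. The map $T$ sends the polygon to the polygon whose vertices are the intersections of consecutive projective normals; in the coordinates $(x,y)$ (after renormalizing to the form $P(\bar x,\bar y)$) it is given by the displayed formula. *)

From Stdlib Require Import Reals.
From Coquelicot Require Import Coquelicot.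
Open Scope R_scope.

Definition Tx (x y : R) : R :=
  (1 + y) * (1 + x - x * y) ^ 2 / ((1 + x) * (-1 - y + x * y) * (1 + x - y ^ 2)).
Definition Ty (x y : R) : R :=
  (x - y) ^ 2 * (1 + x + y) / ((1 + y - x ^ 2) * (1 + x - y ^ 2)).

Definition T (p : R * R) : R * R := (Tx (fst p) (snd p), Ty (fst p) (snd p)).

Definition T_defined (p : R * R) : Prop :=
  let x := fst p in let y := snd p in
  1 + x <> 0 /\ -1 - y + x * y <> 0 /\ 1 + x - y ^ 2 <> 0 /\ 1 + y - x ^ 2 <> 0.

Definition T2 (p : R * R) : R * R := T (T p).

Definition I (p : R * R) : R :=
  (fst p + 1) * (snd p + 1) * (fst p + snd p + 1) / (fst p * snd p).
Definition cubic (r : R) (p : R * R) : R :=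
  (fst p + 1) * (snd p + 1) * (fst p + snd p + 1) - r * fst p * snd p.

Definition jac (F : R * R -> R * R) (p : R * R) : R :=
  let x := fst p in let y := snd p in
  Derive (fun t => fst (F (t, y))) x * Derive (fun t => snd (F (x, t))) y
  - Derive (fun t => fst (F (x, t))) y * Derive (fun t => snd (F (t, y))) x.

(* With [j] the Jacobian determinant of [T], two rational identities carry everything:
   [I_num (T p) = - x y j / 2] and [Tx * Ty = j I_num / 2], where [I = I_num / (x y)].
   Dividing them gives [I o T = -1 / I], hence [I o T^2 = I].  By the chain rule the Jacobian
   of [T^2] at [p] is [j (T p) * j p], and the same two identities (at [T p] and at [p])
   turn [j (T p) j p / (fst (T^2 p) * snd (T^2 p))] into [-4 / (x y)]. *)

From Stdlib Require Import Reals Lra.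
From Coquelicot Require Import Coquelicot.
Open Scope R_scope.

Lemma Rdiv_eq_cross (a b c d : R) : c <> 0 -> d <> 0 -> a * d = b * c -> a / c = b / d.
Proof.
intros hc hd h.
replace (a / c) with (a * d / (c * d)) by (field; auto).
rewrite h; field; auto.
Qed.

Definition has_partials (f fx fy : R -> R -> R) (D : R -> R -> Prop) : Prop :=
  forall (a b : R -> R) (t a' b' : R),
    is_derive a t a' -> is_derive b t b' -> D (a t) (b t) ->
    is_derive (fun s : R => f (a s) (b s)) t (fx (a t) (b t) * a' + fy (a t) (b t) * b').

Section PartialDerivatives.

Variables (f fx fy : R -> R -> R) (D : R -> R -> Prop).
Hypothesis f_partials : has_partials f fx fy D.

Lemma is_derive_partial_x (x y : R) : D x y -> is_derive (fun t => f t y) x (fx x y).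
Proof.
intro hD.
replace (fx x y) with (fx x y * 1 + fy x y * 0) by ring.
apply (f_partials (fun t => t) (fun _ => y)); auto.
- apply (is_derive_id (K := R_AbsRing)).
- auto_derive; auto.
Qed.

Lemma is_derive_partial_y (x y : R) : D x y -> is_derive (fun t => f x t) y (fy x y).
Proof.
intro hD.
replace (fy x y) with (fx x y * 0 + fy x y * 1) by ring.
apply (f_partials (fun _ => x) (fun t => t)); auto.
- auto_derive; auto.
- apply (is_derive_id (K := R_AbsRing)).
Qed.

End PartialDerivatives.

Section JacobianComposition.

Variables (f fx fy g gx gy h hx hy k kx ky : R -> R -> R) (DF DG : R -> R -> Prop).
Hypotheses (f_partials : has_partials f fx fy DF) (g_partials : has_partials g gx gy DF).
Hypotheses (h_partials : has_partials h hx hy DG) (k_partials : has_partials k kx ky DG).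

Lemma jac_comp (x y : R) : DF x y -> DG (f x y) (g x y) ->
  jac (fun p => (h (f (fst p) (snd p)) (g (fst p) (snd p)),
                 k (f (fst p) (snd p)) (g (fst p) (snd p)))) (x, y)
  = (hx (f x y) (g x y) * ky (f x y) (g x y) - hy (f x y) (g x y) * kx (f x y) (g x y))
    * (fx x y * gy x y - fy x y * gx x y).
Proof.
intros hF hG.
pose proof (is_derive_partial_x _ _ _ _ f_partials _ _ hF) as fdx.
pose proof (is_derive_partial_y _ _ _ _ f_partials _ _ hF) as fdy.
pose proof (is_derive_partial_x _ _ _ _ g_partials _ _ hF) as gdx.
pose proof (is_derive_partial_y _ _ _ _ g_partials _ _ hF) as gdy.
unfold jac; cbn [fst snd].
rewrite (is_derive_unique _ _ _ (h_partials _ _ _ _ _ fdx gdx hG)),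
        (is_derive_unique _ _ _ (k_partials _ _ _ _ _ fdy gdy hG)),
        (is_derive_unique _ _ _ (h_partials _ _ _ _ _ fdy gdy hG)),
        (is_derive_unique _ _ _ (k_partials _ _ _ _ _ fdx gdx hG)).
ring.
Qed.

End JacobianComposition.

Definition I_num (x y : R) : R := (x + 1) * (y + 1) * (x + y + 1).

Definition jacT (x y : R) : R :=
  2 * (1 + x - x * y) ^ 2 * (x - y) ^ 2
  / ((1 + x) ^ 2 * (-1 - y + x * y) * (1 + x - y ^ 2) ^ 2 * (1 + y - x ^ 2)).

Definition Tdom (x y : R) : Prop := T_defined (x, y).

Ltac T_denominators :=
  unfold Tdom, T_defined in *; cbn [fst snd] in *;
  repeat match goal with H : _ /\ _ |- _ => destruct H end;
  repeat split;
  repeat (apply Rmult_integral_contrapositive_currified || apply pow_nonzero);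
  try match goal with
      | |- ?a <> 0 => match goal with
                      | H : ?b <> 0 |- _ => let e := fresh in intro e; apply H; rewrite <- e; ring
                      end
      end.

Lemma I_num_T (x y : R) : Tdom x y -> I_num (Tx x y) (Ty x y) = - x * y * jacT x y / 2.
Proof. intro hD; unfold I_num, jacT, Tx, Ty; field; T_denominators. Qed.

Lemma Tx_mul_Ty (x y : R) : Tdom x y -> Tx x y * Ty x y = jacT x y * I_num x y / 2.
Proof. intro hD; unfold I_num, jacT, Tx, Ty; field; T_denominators. Qed.

(* [I (T p) = -1 / I p] with denominators cleared. *)
Lemma I_num_T_mul (x y : R) : Tdom x y ->
  I_num (Tx x y) (Ty x y) * I_num x y = - (x * y) * (Tx x y * Ty x y).
Proof. intro hD; rewrite (I_num_T _ _ hD), (Tx_mul_Ty _ _ hD); field. Qed.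

Definition Tx_num x y := (1 + y) * (1 + x - x * y) ^ 2.
Definition Tx_den x y := (1 + x) * (-1 - y + x * y) * (1 + x - y ^ 2).
Definition Ty_num x y := (x - y) ^ 2 * (1 + x + y).
Definition Ty_den x y := (1 + y - x ^ 2) * (1 + x - y ^ 2).

Definition Tx_dx x y :=
  ((1 + y) * 2 * (1 + x - x * y) * (1 - y) * Tx_den x y
   - Tx_num x y * ((-1 - y + x * y) * (1 + x - y ^ 2) + (1 + x) * y * (1 + x - y ^ 2)
                   + (1 + x) * (-1 - y + x * y)))
  / Tx_den x y ^ 2.
Definition Tx_dy x y :=
  (((1 + x - x * y) ^ 2 - (1 + y) * 2 * (1 + x - x * y) * x) * Tx_den x y
   - Tx_num x y * ((1 + x) * (x - 1) * (1 + x - y ^ 2) - (1 + x) * (-1 - y + x * y) * 2 * y))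
  / Tx_den x y ^ 2.
Definition Ty_dx x y :=
  ((2 * (x - y) * (1 + x + y) + (x - y) ^ 2) * Ty_den x y
   - Ty_num x y * ((1 + y - x ^ 2) - 2 * x * (1 + x - y ^ 2)))
  / Ty_den x y ^ 2.
Definition Ty_dy x y :=
  ((- 2 * (x - y) * (1 + x + y) + (x - y) ^ 2) * Ty_den x y
   - Ty_num x y * ((1 + x - y ^ 2) - 2 * y * (1 + y - x ^ 2)))
  / Ty_den x y ^ 2.

Lemma Tx_partials : has_partials Tx Tx_dx Tx_dy Tdom.
Proof.
intros a b t a' b' ha hb hD; unfold Tx.
assert (ex_derive a t) by (exists a'; exact ha).
assert (ex_derive b t) by (exists b'; exact hb).
auto_derive.
- repeat split; auto; T_denominators.
- replace (Derive (fun s => a s) t) with a' by (symmetry; exact (is_derive_unique _ _ _ ha)).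
  replace (Derive (fun s => b s) t) with b' by (symmetry; exact (is_derive_unique _ _ _ hb)).
  unfold Tx_dx, Tx_dy, Tx_num, Tx_den; field; T_denominators.
Qed.

Lemma Ty_partials : has_partials Ty Ty_dx Ty_dy Tdom.
Proof.
intros a b t a' b' ha hb hD; unfold Ty.
assert (ex_derive a t) by (exists a'; exact ha).
assert (ex_derive b t) by (exists b'; exact hb).
auto_derive.
- repeat split; auto; T_denominators.
- replace (Derive (fun s => a s) t) with a' by (symmetry; exact (is_derive_unique _ _ _ ha)).
  replace (Derive (fun s => b s) t) with b' by (symmetry; exact (is_derive_unique _ _ _ hb)).
  unfold Ty_dx, Ty_dy, Ty_num, Ty_den; field; T_denominators.
Qed.

Lemma T_partials_det (x y : R) : Tdom x y ->
  Tx_dx x y * Ty_dy x y - Tx_dy x y * Ty_dx x y = jacT x y.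
Proof.
intro hD.
unfold Tx_dx, Tx_dy, Ty_dx, Ty_dy, Tx_num, Tx_den, Ty_num, Ty_den, jacT.
field; T_denominators.
Qed.

Lemma jac_T2 (x y : R) : Tdom x y -> Tdom (Tx x y) (Ty x y) ->
  jac T2 (x, y) = jacT (Tx x y) (Ty x y) * jacT x y.
Proof.
intros hD hTD.
rewrite <- (T_partials_det _ _ hD), <- (T_partials_det _ _ hTD).
exact (jac_comp _ _ _ _ _ _ _ _ _ _ _ _ _ _
          Tx_partials Ty_partials Tx_partials Ty_partials x y hD hTD).
Qed.

Lemma I_num_T2_mul (x y : R) : Tdom x y -> Tdom (Tx x y) (Ty x y) ->
  I_num (fst (T2 (x, y))) (snd (T2 (x, y))) * (x * y)
  = I_num x y * (fst (T2 (x, y)) * snd (T2 (x, y))).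
Proof.
intros hD hTD; cbn [T2 T fst snd].
rewrite (I_num_T _ _ hTD), (Tx_mul_Ty _ _ hTD).
replace (I_num x y * (jacT (Tx x y) (Ty x y) * I_num (Tx x y) (Ty x y) / 2))
  with (jacT (Tx x y) (Ty x y) / 2 * (I_num (Tx x y) (Ty x y) * I_num x y)) by field.
rewrite (I_num_T_mul _ _ hD); field.
Qed.

Lemma jac_T2_mul (x y : R) : Tdom x y -> Tdom (Tx x y) (Ty x y) ->
  jac T2 (x, y) * (x * y) = -4 * (fst (T2 (x, y)) * snd (T2 (x, y))).
Proof.
intros hD hTD; rewrite (jac_T2 _ _ hD hTD); cbn [T2 T fst snd].
rewrite (Tx_mul_Ty _ _ hTD), (I_num_T _ _ hD); field.
Qed.

Theorem theorem1 (x y : R) :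
  x <> 0 -> y <> 0 ->
  T_defined (x, y) -> T_defined (T (x, y)) ->
  fst (T2 (x, y)) <> 0 -> snd (T2 (x, y)) <> 0 ->
  I (T2 (x, y)) = I (x, y) /\
  (forall r : R, cubic r (x, y) = 0 -> cubic r (T2 (x, y)) = 0) /\
  jac T2 (x, y) / (fst (T2 (x, y)) * snd (T2 (x, y))) = -4 / (x * y).
Proof.
intros hx hy hD hTD hX hY.
assert (hxy : x * y <> 0) by (apply Rmult_integral_contrapositive_currified; auto).
assert (hXY : fst (T2 (x, y)) * snd (T2 (x, y)) <> 0)
  by (apply Rmult_integral_contrapositive_currified; auto).
pose proof (I_num_T2_mul _ _ hD hTD) as hI.
split; [| split].
- exact (Rdiv_eq_cross _ _ _ _ hXY hxy hI).
- intros r hr; unfold cubic in *; cbn [fst snd] in *.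
  apply (Rmult_eq_reg_r (x * y)); [| exact hxy].
  change ((fst (T2 (x, y)) + 1) * (snd (T2 (x, y)) + 1) * (fst (T2 (x, y)) + snd (T2 (x, y)) + 1))
    with (I_num (fst (T2 (x, y))) (snd (T2 (x, y)))).
  rewrite Rmult_minus_distr_r, hI.
  replace (I_num x y) with (r * x * y) by (unfold I_num; lra); ring.
- exact (Rdiv_eq_cross _ _ _ _ hXY hxy (jac_T2_mul _ _ hD hTD)).
Qed.
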